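(* Let $K\ge 1$ and $T\ge 1$ be integers, let $\mathcal{K}=\{1,\dots,K\}$ and $\mathcal{T}=\{1,\dots,T\}$, and let prices $p_k(t)>0$ be given for all $k\in\mathcal{K}$, $t\in\mathcal{T}$. Write $S=\sum_{k\in\mathcal{K}}\sum_{t\in\mathcal{T}}p_k(t)$. Fix a user $n$ with parameters $\zeta_n>0$, budget $B_n\ge 0$ and minimum energy requirement $E_n^{\min}\ge 0$, and define $$d_{n,k}(t)=\frac{B_n+\zeta_n S}{KT\,p_k(t)}-\zeta_n,\qquad k\in\mathcal{K},\ t\in\mathcal{T}.$$ Then the demands $d_{n,k}(t)$ are feasible, i.e. they satisfy $d_{n,k}(t)\ge 0$ for all $k\in\mathcal{K}$, $t\in\mathcal{T}$, $\sum_{k\in\mathcal{K}}\sum_{t\in\mathcal{T}}p_k(t)d_{n,k}(t)\le B_n$, and $\sum_{k\in\mathcal{K}}\sum_{t\in\mathcal{T}}d_{n,k}(t)\ge E_n^{\min}$, if and only if $$B_n\ge \max\{f_{n,1},f_{n,2}\},$$ where $$f_{n,1}=\max_{k\in\mathcal{K},\,t\in\mathcal{T}}\zeta_n\bigl(KT\,p_k(t)-S\bigr),\qquad f_{n,2}=\frac{E_n^{\min}+\zeta_n KT}{\sum_{k\in\mathcal{K}}\sum_{t\in\mathcal{T}}\frac{1}{KT\,p_k(t)}}-\zeta_n S.$$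
   Context: This arises in a demand response model with $K$ utility companies announcing prices $p_k(t)$ over $T$ periods; user $n$ chooses demands $d_{n,k}(t)$ to maximize $\gamma_n\sum_{k}\sum_{t}\ln(\zeta_n+d_{n,k}(t))$ subject to the budget constraint $\sum_k\sum_t p_k(t)d_{n,k}(t)\le B_n$, the minimum energy constraint $\sum_k\sum_t d_{n,k}(t)\ge E_n^{\min}$, and nonnegativity $d_{n,k}(t)\ge 0$; the displayed $d_{n,k}(t)$ is the maximizer obtained when the minimum energy constraint is ignored. *)

From mathcomp Require Import all_boot all_order all_algebra.
Set Implicit Arguments. Unset Strict Implicit. Unset Printing Implicit Defensive.
Import Order.TTheory GRing.Theory Num.Theory.
Local Open Scope ring_scope.

(* Numbers of companies K = K'.+1 >= 1 and periods T = T'.+1 >= 1;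
   indices k : 'I_K'.+1, t : 'I_T'.+1 (0-based). *)
Section Defs.
Variables (R : realFieldType) (K' T' : nat).
Local Notation K := K'.+1.
Local Notation T := T'.+1.
Variable p : 'I_K -> 'I_T -> R.

Definition Ssum : R := \sum_(k < K) \sum_(t < T) p k t.

Definition KT : R := (K * T)%:R.

Definition demand (zeta B : R) (k : 'I_K) (t : 'I_T) : R :=
  (B + zeta * Ssum) / (KT * p k t) - zeta.

Definition feasible (zeta B Emin : R) : Prop :=
  [/\ (forall k t, 0 <= demand zeta B k t),
      \sum_(k < K) \sum_(t < T) p k t * demand zeta B k t <= B &
      Emin <= \sum_(k < K) \sum_(t < T) demand zeta B k t].

(* max over the nonempty index set, seeded with the (0,0) term *)
Definition f1 (zeta : R) : R :=
  \big[Num.max/zeta * (KT * p ord0 ord0 - Ssum)]_(k < K)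
    \big[Num.max/zeta * (KT * p ord0 ord0 - Ssum)]_(t < T)
       (zeta * (KT * p k t - Ssum)).

Definition f2 (zeta Emin : R) : R :=
  (Emin + zeta * KT) / (\sum_(k < K) \sum_(t < T) (KT * p k t)^-1)
  - zeta * Ssum.
End Defs.

From mathcomp Require Import all_boot all_order all_algebra.
From mathcomp Require Import ring.
Import Order.TTheory GRing.Theory Num.Theory.
Local Open Scope ring_scope.

(* Write A = B + zeta S.  Then p_k(t) d_{n,k}(t) = A/KT - zeta p_k(t), so the
   expenditure always sums to exactly B and the budget constraint is
   automatic.  Each nonnegativity constraint reads A >= zeta KT p_k(t), i.e.
   B >= zeta (KT p_k(t) - S), and the total demand is A I - zeta KT with
   I = sum 1/(KT p_k(t)) > 0, which is at least Emin iff B >= f2. *)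

Lemma sumr_ord_gt0 (R : numDomainType) n (F : 'I_n.+1 -> R) :
  (forall i, 0 < F i) -> 0 < \sum_i F i.
Proof.
move=> F_gt0; rewrite big_ord_recl ltr_pwDl //.
by apply: sumr_ge0 => i _; apply: ltW.
Qed.

Section Demand.
Variables (R : realFieldType) (K' T' : nat).
Local Notation K := K'.+1.
Local Notation T := T'.+1.
Variable p : 'I_K -> 'I_T -> R.
Hypothesis p_gt0 : forall k t, 0 < p k t.
Variable zeta : R.

Local Notation S := (Ssum p).
Local Notation KT := (KT R K' T').
Local Notation inv_price_sum := (\sum_(k < K) \sum_(t < T) (KT * p k t)^-1).

Lemma KT_gt0 : 0 < KT.
Proof. by rewrite ltr0n muln_gt0. Qed.

Lemma sum2_const (c : R) : \sum_(k < K) \sum_(t < T) c = KT * c.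
Proof.
under eq_bigr do rewrite sumr_const card_ord.
by rewrite sumr_const card_ord -mulrnA mulr_natl mulnC.
Qed.

Lemma inv_price_sum_gt0 : 0 < inv_price_sum.
Proof.
do 2!apply: sumr_ord_gt0 => ?.
by rewrite invr_gt0 mulr_gt0 ?KT_gt0.
Qed.

Lemma price_demandE B k t :
  p k t * demand p zeta B k t = (B + zeta * S) / KT - zeta * p k t.
Proof.
rewrite /demand; move: (KT) KT_gt0 (p_gt0 k t) => c c_gt0 pkt_gt0.
by field; rewrite !gt_eqF.
Qed.

Lemma sum_price_demand B :
  \sum_(k < K) \sum_(t < T) p k t * demand p zeta B k t = B.
Proof.
under eq_bigr do under eq_bigr do rewrite price_demandE.
under eq_bigr do rewrite big_split /= sumrN.
rewrite big_split /= sumrN sum2_const mulrC divfK ?gt_eqF ?KT_gt0 //.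
by under eq_bigr do rewrite -mulr_sumr; rewrite -mulr_sumr addrK.
Qed.

Lemma sum_demand B :
  \sum_(k < K) \sum_(t < T) demand p zeta B k t
  = (B + zeta * S) * inv_price_sum - zeta * KT.
Proof.
rewrite /demand.
under eq_bigr do rewrite big_split /= sumrN.
rewrite big_split /= sumrN sum2_const [KT * _]mulrC.
rewrite (@mulr_sumr _ _ _ _ _ (B + zeta * S)).
by under [in RHS]eq_bigr do rewrite (@mulr_sumr _ _ _ _ _ (B + zeta * S)).
Qed.

Lemma demand_ge0E B k t :
  (0 <= demand p zeta B k t) = (zeta * (KT * p k t - S) <= B).
Proof.
rewrite /demand subr_ge0 ler_pdivlMr ?mulr_gt0 ?KT_gt0 //.
by rewrite mulrBr lerBlDr.
Qed.

Lemma f1_leP B :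
  reflect (forall k t, zeta * (KT * p k t - S) <= B) (f1 p zeta <= B).
Proof.
apply: (iffP (bigmax_leP _ _ _ _)) => [[_ le_f1] k t | le_B].
  by have /bigmax_leP[_] := le_f1 k isT; apply.
by split=> // k _; apply/bigmax_leP; split=> // t _.
Qed.

Lemma f2_leE B Emin :
  (f2 p zeta Emin <= B) = (Emin <= \sum_(k < K) \sum_(t < T) demand p zeta B k t).
Proof.
by rewrite sum_demand /f2 lerBlDr lerBrDr ler_pdivrMr ?inv_price_sum_gt0.
Qed.

End Demand.

Theorem theorem1 (R : realFieldType) (K' T' : nat)
  (p : 'I_K'.+1 -> 'I_T'.+1 -> R) (zeta B Emin : R) :
  (forall k t, 0 < p k t) -> 0 < zeta -> 0 <= B -> 0 <= Emin ->
  feasible p zeta B Emin <-> Num.max (f1 p zeta) (f2 p zeta Emin) <= B.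
Proof.
move=> p_gt0 _ _ _; rewrite ge_max f2_leE //.
split=> [[demand_ge0 _ Emin_le] | /andP[/f1_leP le_f1 Emin_le]].
  by apply/andP; split=> //; apply/f1_leP => k t; rewrite -demand_ge0E.
split=> //; last by rewrite sum_price_demand.
by move=> k t; rewrite demand_ge0E.
Qed.
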